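(* Let the setting and Assumption (A) be as in the context and assume Assumption (A) holds. Let $\delta_0\le\frac{c_0}{\varsigma^2}\frac{\overline\sigma}{\|\mathbf X\|_{\infty,2}}$ with $c_0\in[0,1/2)$ a sufficiently small absolute constant. Then there exists a constant $c=c(c_0)\in(0,1)$ such that for all $k\in[K]$ and all $\theta\in\mathbb{R}^L$ with $\|\theta-\theta_k^*\|_2\le\delta_0/\overline\sigma$, $$(1-c)\underline\sigma^2\le\lambda_L(H_\theta)\le\lambda_1(H_\theta)\le(1+c)\overline\sigma^2.$$
   Context: $\mathbf X\in\mathbb{R}^{p\times L}$ has rows $x_j^\top$, $\|\mathbf X\|_{\infty,2}=\max_j\|x_j\|_2$; $A(x_j;\theta)=\exp(x_j^\top\theta)/\sum_l\exp(x_l^\top\theta)$, $A(\theta)\in\Delta^p$; $H_\theta=\mathbf X^\top(\mathrm{diag}(A(\theta))-A(\theta)A(\theta)^\top)\mathbf X$, with eigenvalues $\lambda_1\ge\dots\ge\lambda_L$. For $\omega=(\boldsymbol\alpha,\theta_1,\dots,\theta_K)$, $\pi(x_j;\omega)=\sum_k\alpha_kA(x_j;\theta_k)$. $\omega^*=(\boldsymbol\alpha^*,\theta_1^*,\dots,\theta_K^* )$ with all $\alpha^*_k>0$, $\pi^*=\pi(\cdot;\omega^* )$, and $\omega^*\in\Omega^*$, the set of maximizers of $\sum_j\pi^*(x_j)\log\pi(x_j;\omega)$. Assumption (A): constants $0<\underline\sigma^2\le\overline\sigma^2$, $\varsigma^2<\infty$ such that for every $\omega'\in\Omega^*$, $a,b\in[K]$,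 $u\in[0,1]$, $\theta=u\theta'_a+(1-u)\theta'_b$: $\underline\sigma^2\le\lambda_L(H_\theta)\le\lambda_1(H_\theta)\le\overline\sigma^2$ and $\lambda_1(H_\theta^{-1/2}\mathbf X^\top\mathrm{diag}(A(\theta))\mathbf XH_\theta^{-1/2})\le\varsigma^2$. *)

From HB Require Import structures.
From mathcomp Require Import all_boot all_order all_algebra.
From mathcomp Require Import all_classical all_reals all_analysis.
Set Implicit Arguments. Unset Strict Implicit. Unset Printing Implicit Defensive.
Import Order.TTheory GRing.Theory Num.Theory.
Local Open Scope ring_scope.

Section Defs.
Variable R : realType.

Definition norm2 (L : nat) (v : 'cV[R]_L) : R := Num.sqrt (\sum_l (v l 0) ^+ 2).

Definition norm_inf2 (p L : nat) (X : 'M[R]_(p, L)) : R :=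
  \big[Num.max/0]_(j < p) Num.sqrt (\sum_l (X j l) ^+ 2).

Definition Asm (p L : nat) (X : 'M[R]_(p, L)) (th : 'cV[R]_L) (j : 'I_p) : R :=
  expR ((X *m th) j 0) / \sum_(l < p) expR ((X *m th) l 0).

Definition Avec (p L : nat) (X : 'M[R]_(p, L)) (th : 'cV[R]_L) : 'cV[R]_p :=
  \col_j Asm X th j.

Definition Hmat (p L : nat) (X : 'M[R]_(p, L)) (th : 'cV[R]_L) : 'M[R]_L :=
  X^T *m (diag_mx (Avec X th)^T - Avec X th *m (Avec X th)^T) *m X.

Definition Mmat (p L : nat) (X : 'M[R]_(p, L)) (th : 'cV[R]_L) : 'M[R]_L :=
  X^T *m diag_mx (Avec X th)^T *m X.

Definition mix (p L K : nat) (X : 'M[R]_(p, L)) (al : 'I_K -> R)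
  (ths : 'I_K -> 'cV[R]_L) (j : 'I_p) : R :=
  \sum_k al k * Asm X (ths k) j.

Definition in_simplex (K : nat) (al : 'I_K -> R) : Prop :=
  (forall k, 0 <= al k) /\ \sum_k al k = 1.

Definition loglik (p L K : nat) (X : 'M[R]_(p, L)) (als : 'I_K -> R)
  (thss : 'I_K -> 'cV[R]_L) (al : 'I_K -> R) (ths : 'I_K -> 'cV[R]_L) : R :=
  \sum_j mix X als thss j * ln (mix X al ths j).

Definition in_Omega_star (p L K : nat) (X : 'M[R]_(p, L)) (als : 'I_K -> R)
  (thss : 'I_K -> 'cV[R]_L) (al : 'I_K -> R) (ths : 'I_K -> 'cV[R]_L) : Prop :=
  in_simplex al /\
  forall (al' : 'I_K -> R) (ths' : 'I_K -> 'cV[R]_L),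
    in_simplex al' -> loglik X als thss al' ths' <= loglik X als thss al ths.

(* Assumption (A). Eigenvalues are those of mxalgebra ([eigenvalue]).
   The eigenvalues of H^{-1/2} M H^{-1/2} are those of the similar matrix
   H^{-1} M. *)
Definition assumptionA (p L K : nat) (X : 'M[R]_(p, L)) (als : 'I_K -> R)
  (thss : 'I_K -> 'cV[R]_L) (slo2 shi2 vs2 : R) : Prop :=
  0 < slo2 /\ slo2 <= shi2 /\
  forall (al' : 'I_K -> R) (ths' : 'I_K -> 'cV[R]_L),
    in_Omega_star X als thss al' ths' ->
    forall (a b : 'I_K) (u : R), 0 <= u <= 1 ->
      let th := u *: ths' a + (1 - u) *: ths' b in
      (forall lam, eigenvalue (Hmat X th) lam -> slo2 <= lam <= shi2) /\
      (forall lam, eigenvalue (invmx (Hmat X th) *m Mmat X th) lam -> lam <= vs2).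

End Defs.

From HB Require Import structures.
From mathcomp Require Import all_boot all_order all_algebra.
From mathcomp Require Import all_classical all_reals all_analysis.
From mathcomp Require Import complex spectral sesquilinear.
From mathcomp Require Import ring lra.
Set Implicit Arguments. Unset Strict Implicit.
Import Order.TTheory GRing.Theory Num.Theory.
Local Open Scope ring_scope.

(* Write [y = X v]. Then [v^T H_theta v] is the variance of [y] under the
   softmax weights [A(theta)]; as a variance is the least weighted mean square
   deviation from a constant, multiplying the weights by at most [K] multiplies
   it by at most [K]. Moving [theta] away from [theta_k^*] moves every logit
   [x_j^T theta] by at most [m = ||X||_{oo,2} ||theta - theta_k^*||], hence
   every softmax weight by a factor in [[e^{-2m}, e^{2m}]], so the quadratic
   forms of [H_theta] and [H_{theta_k^*}] agree up to the factor [e^{2m}].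
   Assumption (A), applied at [omega^*] with [a = b = k], bounds the spectrum
   of [H_{theta_k^*}], and Rayleigh quotients transfer these bounds. Finally
   [X^T diag(A) X = H + (X^T A)(X^T A)^T] forces [varsigma^2 >= 1], so
   [m <= c_0 < 1/8], [e^{2m} <= 3/2] and [c = 1/2] works. *)

Section Rayleigh.
Variable R : rcfType.
Local Notation toC := (real_complex R).

Lemma symmetric_quad_form_spectral n (H : 'M[R]_n) (v : 'rV_n) : H^T = H ->
  exists r s : 'I_n -> R, [/\ forall i, eigenvalue H (r i), forall i, 0 <= s i,
    (v *m H *m v^T) 0 0 = \sum_i r i * s i & (v *m v^T) 0 0 = \sum_i s i].
Proof.
move=> HT; pose Hc := map_mx toC H; pose vc := map_mx toC v.
have Hherm : Hc \is hermsymmx.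
  apply: realsym_hermsym.
    apply/is_hermitianmxP; rewrite expr0 scale1r; apply/matrixP => i j.
    by rewrite !mxE -[in LHS]HT mxE.
  by apply/mxOverP => i j; rewrite mxE; apply/complex_realP; exists (H i j).
have /orthomx_spectralP HE := hermitian_normalmx Hherm.
set P := spectralmx Hc in HE; set d := spectral_diag Hc in HE.
have Pu : P \is unitarymx := spectral_unitarymx Hc.
have Punit : P \in unitmx := spectral_unit Hc.
have dR i : toC (complex.Re (d 0 i)) = d 0 i.
  exact/RRe_real/(mxOverP (hermitian_spectral_diag_real Hherm)).
have quadE (A : 'M[R]_n) :
    toC ((v *m A *m v^T) 0 0) = (vc *m map_mx toC A *m vc^t*%sesqui) 0 0.
  have vcT : (vc^t* = vc^T)%sesqui.
    by apply/matrixP => i j; rewrite !mxE conj_Creal //; apply/complex_realP; exists (v j i).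
  by rewrite vcT /vc map_trmx -!map_mxM [RHS]mxE.
(* With [w := vc P^*], both forms become sums of [|w_i|^2] weighted by the
   (real) eigenvalues [d_i] and by [1] respectively. *)
pose w := vc *m P^t*%sesqui.
have wE : (w^t* = P *m vc^t*)%sesqui by rewrite /w trmx_mul map_mxM trmxCK.
have HcE : vc *m Hc *m vc^t*%sesqui = w *m diag_mx d *m w^t*%sesqui.
  by rewrite HE invmx_unitary // wE /w !mulmxA.
have vvE : vc *m vc^t*%sesqui = w *m w^t*%sesqui.
  by rewrite wE /w mulmxA -(mulmxA vc) -invmx_unitary // mulVmx // mulmx1.
clearbody w.
have wR i : toC (complex.Re (w 0 i * (w 0 i)^*)) = w 0 i * (w 0 i)^*.
  exact/RRe_real/ger0_real/mul_conjC_ge0.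
exists (fun i => complex.Re (d 0 i)), (fun i => complex.Re (w 0 i * (w 0 i)^*)).
split.
- move=> i; rewrite -(eigenvalue_map toC) /= dR; apply/eigenvalueP.
  exists (delta_mx 0 i *m P).
    by rewrite -/Hc HE !mulmxA mulmxK // -[_ *m diag_mx d]rowE row_diag_mx -scalemxAl.
  by rewrite mulmx_free_eq0 ?row_free_unit // -mxrank_eq0 mxrank_delta.
- by move=> i; rewrite -ler0c wR mul_conjC_ge0.
- apply: (fmorph_inj toC); apply: etrans (quadE H) _.
  rewrite HcE mul_mx_diag mxE rmorph_sum; apply: eq_bigr => i _.
  by rewrite rmorphM /= dR wR !mxE mulrCA mulrA.
rewrite -{1}(mulmx1 v); apply: (fmorph_inj toC); apply: etrans (quadE 1%:M) _.
rewrite map_mx1 mulmx1 vvE mxE rmorph_sum; apply: eq_bigr => i _.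
by rewrite /= wR !mxE.
Qed.

Lemma rayleigh_lb n (H : 'M[R]_n) (a : R) (v : 'rV_n) : H^T = H ->
  (forall l, eigenvalue H l -> a <= l) -> a * (v *m v^T) 0 0 <= (v *m H *m v^T) 0 0.
Proof.
move=> HT H_ge; have [r [s [rH s_ge0 -> ->]]] := symmetric_quad_form_spectral v HT.
by rewrite mulr_sumr; apply: ler_sum => i _; rewrite ler_wpM2r // H_ge.
Qed.

Lemma rayleigh_ub n (H : 'M[R]_n) (b : R) (v : 'rV_n) : H^T = H ->
  (forall l, eigenvalue H l -> l <= b) -> (v *m H *m v^T) 0 0 <= b * (v *m v^T) 0 0.
Proof.
move=> HT H_le; have [r [s [rH s_ge0 -> ->]]] := symmetric_quad_form_spectral v HT.
by rewrite mulr_sumr; apply: ler_sum => i _; rewrite ler_wpM2r // H_le.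
Qed.

End Rayleigh.

Lemma eigenvalue_dim_gt0 (F : fieldType) n (A : 'M[F]_n) a : eigenvalue A a -> (0 < n)%N.
Proof. by case: n A => // A /eigenvalueP[v _]; rewrite thinmx0 eqxx. Qed.

Lemma eigenvalue_gt0_unitmx (F : numFieldType) n (A : 'M[F]_n) a : 0 < a ->
  (forall l, eigenvalue A l -> a <= l) -> A \in unitmx.
Proof.
move=> a_gt0 A_ge; apply/negPn/negP => A_sing.
suff /A_ge : eigenvalue A 0 by move=> /(lt_le_trans a_gt0); rewrite ltxx.
apply/eigenvalueP; exists (nz_row (kermx A)).
  by rewrite scale0r; apply/sub_kermxP; apply: nz_row_sub.
by rewrite nz_row_eq0 kermx_eq0 row_free_unit.
Qed.

Lemma row_dot_self_gt0 (R : realDomainType) n (v : 'rV[R]_n) :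
  v != 0 -> 0 < (v *m v^T) 0 0.
Proof.
move=> v_neq0; have sqE i : v 0 i * v^T i 0 = v 0 i ^+ 2 by rewrite mxE expr2.
rewrite lt_def mxE sumr_ge0 ?andbT => [|i _]; last by rewrite sqE sqr_ge0.
apply: contra v_neq0 => /eqP /psumr_eq0P v0; apply/eqP/rowP => i.
by apply/eqP; rewrite mxE -sqrf_eq0 -sqE v0 // => j _; rewrite sqE sqr_ge0.
Qed.

Section SumsOfSquares.
Variable R : realDomainType.

Definition wvar p (w y : 'I_p -> R) :=
  \sum_j w j * y j ^+ 2 - (\sum_j w j * y j) ^+ 2.

Lemma wvar_shift p (w y : 'I_p -> R) c : \sum_j w j = 1 ->
  \sum_j w j * (y j - c) ^+ 2 = wvar w y + (\sum_j w j * y j - c) ^+ 2.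
Proof.
move=> w_sum1; have -> : \sum_j w j * (y j - c) ^+ 2 =
    \sum_j w j * y j ^+ 2 - 2 * c * \sum_j w j * y j + c ^+ 2 * \sum_j w j.
  rewrite !mulr_sumr -sumrB -big_split /=; apply: eq_bigr => j _; ring.
by rewrite w_sum1 /wvar; ring.
Qed.

Lemma wvar_le_scale p (w w' y : 'I_p -> R) (K : R) :
  \sum_j w j = 1 -> \sum_j w' j = 1 ->
  (forall j, 0 <= w j) -> (forall j, w' j <= K * w j) ->
  wvar w' y <= K * wvar w y.
Proof.
move=> w_sum1 w'_sum1 w_ge0 w'_le.
pose c := \sum_j w j * y j.
have := wvar_shift y c w_sum1; rewrite subrr expr0n addr0 => <-.
apply: le_trans (_ : \sum_j w' j * (y j - c) ^+ 2 <= _).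
  by rewrite wvar_shift // lerDl sqr_ge0.
rewrite mulr_sumr; apply: ler_sum => j _.
by rewrite mulrA ler_wpM2r ?sqr_ge0.
Qed.

Lemma cauchy_schwarz n (a b : 'I_n -> R) :
  (\sum_i a i * b i) ^+ 2 <= (\sum_i a i ^+ 2) * (\sum_i b i ^+ 2).
Proof.
set A := \sum_i a i ^+ 2; set B := \sum_i b i ^+ 2; set C := \sum_i a i * b i.
have B_ge0 : 0 <= B by rewrite sumr_ge0 // => i _; rewrite sqr_ge0.
have [B_gt0 | B_le0] := ltrP 0 B; last first.
  have B0 : B = 0 by apply/eqP; rewrite eq_le B_le0 B_ge0.
  have b0 i : b i = 0.
    by apply/eqP; rewrite -sqrf_eq0; apply/eqP/(psumr_eq0P _ B0) => // j _; rewrite sqr_ge0.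
  by rewrite /C big1 => [|i _]; rewrite ?B0 ?b0 ?mulr0 ?expr0n.
have : 0 <= \sum_i (B * a i - C * b i) ^+ 2 by rewrite sumr_ge0 // => i _; rewrite sqr_ge0.
have -> : \sum_i (B * a i - C * b i) ^+ 2 = B * (A * B - C ^+ 2).
  have -> : \sum_i (B * a i - C * b i) ^+ 2 =
      \sum_i (B ^+ 2 * a i ^+ 2 - 2 * B * C * (a i * b i) + C ^+ 2 * b i ^+ 2).
    by apply: eq_bigr => i _; ring.
  rewrite big_split sumrB /= -!mulr_sumr -/A -/B -/C; ring.
by rewrite pmulr_rge0 // subr_ge0 mulrC.
Qed.

End SumsOfSquares.

Lemma norm_sum_mul_le (R : rcfType) n (a b : 'I_n -> R) :
  `|\sum_i a i * b i| <= Num.sqrt (\sum_i a i ^+ 2) * Num.sqrt (\sum_i b i ^+ 2).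
Proof.
have sqr_sum_ge0 (c : 'I_n -> R) : 0 <= \sum_i c i ^+ 2.
  by rewrite sumr_ge0 // => i _; rewrite sqr_ge0.
by rewrite -sqrtrM // -sqrtr_sqr ler_sqrt ?mulr_ge0 ?cauchy_schwarz.
Qed.

Section Softmax.
Variable R : realType.
Variables (p L : nat) (X : 'M[R]_(p, L)).

Lemma Asm_ge0 th j : 0 <= Asm X th j.
Proof. by rewrite divr_ge0 ?expR_ge0 ?sumr_ge0 // => i _; rewrite expR_ge0. Qed.

Lemma sum_Asm th : (0 < p)%N -> \sum_j Asm X th j = 1.
Proof.
move=> p_gt0; rewrite -mulr_suml divff // gt_eqF // (bigD1 (Ordinal p_gt0)) //=.
by rewrite ltr_pwDl ?expR_gt0 ?sumr_ge0 // => i _; rewrite expR_ge0.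
Qed.

(* Numerator and normalising constant each move by a factor at most [expR m]. *)
Lemma Asm_le_expR th th' (m : R) j :
  (forall i, `|(X *m th') i 0 - (X *m th) i 0| <= m) ->
  Asm X th' j <= expR m ^+ 2 * Asm X th j.
Proof.
move=> near.
have up i : expR ((X *m th') i 0) <= expR m * expR ((X *m th) i 0).
  by rewrite -expRD ler_expR; have := near i; rewrite ler_norml => /andP[_]; lra.
have lo i : expR (- m) * expR ((X *m th) i 0) <= expR ((X *m th') i 0).
  by rewrite -expRD ler_expR; have := near i; rewrite ler_norml => /andP[+ _]; lra.
rewrite /Asm; set S := \sum_l expR ((X *m th) l 0); set S' := \sum_l expR ((X *m th') l 0).
have S_gt0 : 0 < S.
  by rewrite /S (bigD1 j) //= ltr_pwDl ?expR_gt0 ?sumr_ge0 // => i _; rewrite expR_ge0.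
have S'_ge : expR (- m) * S <= S' by rewrite mulr_sumr ler_sum.
have mS_gt0 : 0 < expR (- m) * S by rewrite mulr_gt0 ?expR_gt0.
apply: le_trans (_ : expR m * expR ((X *m th) j 0) / (expR (- m) * S) <= _).
  rewrite ler_pM ?expR_ge0 ?invr_ge0 ?(le_trans (ltW mS_gt0) S'_ge) //.
  by rewrite lef_pV2 ?posrE // (lt_le_trans mS_gt0 S'_ge).
by rewrite expRN invfM invrK expr2 mulrACA.
Qed.

Lemma Hmat_quad_form th (v : 'rV_L) :
  (v *m Hmat X th *m v^T) 0 0 = wvar (Asm X th) (fun j => (v *m X^T) 0 j).
Proof.
set y := v *m X^T; set A := Avec X th.
have -> : v *m Hmat X th *m v^T = y *m (diag_mx A^T - A *m A^T) *m y^T.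
  by rewrite /Hmat /y trmx_mul trmxK !mulmxA.
have diagE : (y *m diag_mx A^T *m y^T) 0 0 = \sum_j Asm X th j * y 0 j ^+ 2.
  by rewrite mul_mx_diag mxE; apply: eq_bigr => j _; rewrite !mxE; ring.
have rank1E : (y *m (A *m A^T) *m y^T) 0 0 = (\sum_j Asm X th j * y 0 j) ^+ 2.
  rewrite mulmxA -mulmxA mxE big_ord1 expr2.
  by congr (_ * _); rewrite mxE; apply: eq_bigr => j _; rewrite !mxE mulrC.
rewrite /wvar mulmxBr mulmxBl -diagE -rank1E [LHS]mxE; congr (_ + _).
by rewrite mxE.
Qed.

Lemma trmx_Hmat th : (Hmat X th)^T = Hmat X th.
Proof.
by rewrite /Hmat !trmx_mul trmxK linearB /= tr_diag_mx trmx_mul trmxK !mulmxA.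
Qed.

Lemma Mmat_Hmat th :
  Mmat X th = Hmat X th + (X^T *m Avec X th) *m (X^T *m Avec X th)^T.
Proof. by rewrite /Hmat /Mmat mulmxBr mulmxBl trmx_mul trmxK !mulmxA subrK. Qed.

Lemma Hmat_quad_form_le th th' (m : R) (v : 'rV_L) :
  (forall i, `|(X *m th') i 0 - (X *m th) i 0| <= m) ->
  (v *m Hmat X th' *m v^T) 0 0 <= expR m ^+ 2 * (v *m Hmat X th *m v^T) 0 0.
Proof.
move=> near; rewrite [X in X <= _]Hmat_quad_form [X in _ <= _ * X]Hmat_quad_form.
have [p0 | p_gt0] := posnP p.
  have no_ord (j : 'I_p) : False by case: j; rewrite p0.
  by rewrite /wvar !big1 ?expr0n ?subrr ?mulr0 // => j; case: (no_ord j).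
apply: wvar_le_scale; rewrite ?sum_Asm // => j; first exact: Asm_ge0.
exact: Asm_le_expR.
Qed.

Lemma logit_dist_le th th' i :
  `|(X *m th) i 0 - (X *m th') i 0| <= norm_inf2 X * norm2 (th - th').
Proof.
have -> : (X *m th) i 0 - (X *m th') i 0 = (X *m (th - th')) i 0.
  by rewrite mulmxBr !mxE.
rewrite mxE; apply: le_trans (norm_sum_mul_le _ _) _.
rewrite ler_wpM2r ?sqrtr_ge0 //.
exact: (le_bigmax 0 (fun j : 'I_p => Num.sqrt (\sum_l X j l ^+ 2)) i).
Qed.

Lemma norm_inf2_ge0 : 0 <= norm_inf2 X.
Proof. exact: bigmax_ge_id. Qed.

(* [H^-1 M = 1 + H^-1 w w^T] with [w = X^T A] has the eigenvalue [1 + w^T H^-1 w >= 1]. *)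
Lemma HinvM_eigen_ub_ge1 th (a s : R) : (0 < L)%N -> 0 < a ->
  (forall l, eigenvalue (Hmat X th) l -> a <= l) ->
  (forall l, eigenvalue (invmx (Hmat X th) *m Mmat X th) l -> l <= s) -> 1 <= s.
Proof.
move=> L_gt0 a_gt0 H_ge HM_le; set H := Hmat X th.
have H_unit : H \in unitmx := eigenvalue_gt0_unitmx a_gt0 H_ge.
set w := X^T *m Avec X th.
have HME : invmx H *m Mmat X th = 1%:M + invmx H *m w *m w^T.
  by rewrite Mmat_Hmat -/H -/w mulmxDr mulVmx // mulmxA.
clearbody w; have [w0 | w_neq0] := eqVneq w 0.
  apply: HM_le; apply/eigenvalueP; exists (const_mx 1).
    by rewrite HME w0 mulmx0 mul0mx addr0 mulmx1 scale1r.
  by apply/negP => /eqP/rowP/(_ (Ordinal L_gt0)) /eqP; rewrite !mxE oner_eq0.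
set q := (w^T *m invmx H *m w) 0 0.
have q_ge0 : 0 <= q.
  set u := w^T *m invmx H.
  have -> : q = (u *m H *m u^T) 0 0.
    by rewrite /q /u trmx_mul trmx_inv trmx_Hmat -/H trmxK mulmxKV // [in RHS]mulmxA.
  have H_ge0 l : eigenvalue H l -> 0 <= l by move/H_ge; apply: le_trans (ltW a_gt0).
  by have := rayleigh_lb u (trmx_Hmat th) H_ge0; rewrite mul0r.
suff /HM_le : eigenvalue (invmx H *m Mmat X th) (1 + q) by apply: le_trans; rewrite lerDl.
apply/eigenvalueP; exists w^T; last by rewrite trmx_eq0.
rewrite HME mulmxDr mulmx1 !mulmxA [w^T *m _ *m _]mx11_scalar mul_scalar_mx.
by rewrite scalerDl scale1r.
Qed.

Lemma Hmat_eigenvalue_perturb th th' (m a b lam : R) :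
  (forall i, `|(X *m th) i 0 - (X *m th') i 0| <= m) ->
  (forall l, eigenvalue (Hmat X th') l -> a <= l <= b) ->
  eigenvalue (Hmat X th) lam -> a <= expR m ^+ 2 * lam /\ lam <= expR m ^+ 2 * b.
Proof.
move=> near spec /eigenvalueP[v v_eig v_neq0].
have nv_gt0 := row_dot_self_gt0 v_neq0.
have qE : (v *m Hmat X th *m v^T) 0 0 = lam * (v *m v^T) 0 0.
  by rewrite v_eig -scalemxAl mxE.
have near' i : `|(X *m th') i 0 - (X *m th) i 0| <= m by rewrite distrC.
split; rewrite -(ler_pM2r nv_gt0) -mulrA -qE.
  apply: le_trans (rayleigh_lb (a := a) v (trmx_Hmat th') _) (Hmat_quad_form_le v near').
  by move=> l /spec /andP[].
apply: le_trans (Hmat_quad_form_le v near) _.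
rewrite ler_wpM2l ?exprn_ge0 ?expR_ge0 // rayleigh_ub ?trmx_Hmat // => l.
by move=> /spec /andP[].
Qed.

End Softmax.

Lemma expR_sqr_le (R : realType) (m : R) : m <= 1/8 -> expR m ^+ 2 <= 3/2.
Proof.
move=> m_le; have E_gt0 := expR_gt0 m.
have E_le : expR m * (1 - m) <= 1.
  have := expR_ge1Dx (- m); rewrite expRN => /(ler_wpM2l (ltW E_gt0)).
  by rewrite mulfV ?gt_eqF.
nra.
Qed.

Lemma scaled_radius_le (R : realFieldType) (N r delta0 c0 s shi : R) :
  0 <= N -> 0 < shi -> 1 <= s -> 0 <= c0 ->
  r <= delta0 / shi -> delta0 <= c0 / s * (shi / N) -> N * r <= c0.
Proof.
move=> N_ge0 shi_gt0 s_ge1 c0_ge0 r_le delta0_le.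
have s_gt0 : 0 < s by apply: lt_le_trans s_ge1.
have [-> | N_neq0] := eqVneq N 0; first by rewrite mul0r.
apply: le_trans (_ : N * (delta0 / shi) <= _); first by rewrite ler_wpM2l.
apply: le_trans (_ : c0 / s <= _); last by rewrite ler_pdivrMr // ler_peMr.
have -> : c0 / s = N * (c0 / s * (shi / N) / shi) by field; rewrite N_neq0 !gt_eqF.
by rewrite ler_wpM2l // ler_wpM2r // invr_ge0 ltW.
Qed.

Theorem lemma8 :
  forall R : realType,
  exists cbar : R, 0 < cbar <= 1/2 /\
  forall c0 : R, 0 <= c0 < cbar ->
  exists c : R, 0 < c < 1 /\
  forall (p L K : nat) (X : 'M[R]_(p, L))
    (als : 'I_K -> R) (thss : 'I_K -> 'cV[R]_L)
    (slo shi vs2 delta0 : R),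
    in_Omega_star X als thss als thss ->
    (forall k, 0 < als k) ->
    0 < slo <= shi ->
    assumptionA X als thss (slo ^+ 2) (shi ^+ 2) vs2 ->
    delta0 <= c0 / vs2 * (shi / norm_inf2 X) ->
    forall (k : 'I_K) (th : 'cV[R]_L),
      norm2 (th - thss k) <= delta0 / shi ->
      forall lam, eigenvalue (Hmat X th) lam ->
        (1 - c) * slo ^+ 2 <= lam <= (1 + c) * shi ^+ 2.
Proof.
move=> R; exists (1/8); split; first by apply/andP; split; lra.
move=> c0 /andP[c0_ge0 c0_lt]; exists (1/2); split; first by apply/andP; split; lra.
move=> p L K X als thss slo shi vs2 delta0 omega_star _ /andP[slo_gt0 slo_le_shi].
move=> [_ [_ assA]] delta0_le k th th_near lam lam_eig.
have [spec HinvM_le] : (forall l, eigenvalue (Hmat X (thss k)) l -> slo ^+ 2 <= l <= shi ^+ 2)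
    /\ (forall l, eigenvalue (invmx (Hmat X (thss k)) *m Mmat X (thss k)) l -> l <= vs2).
  have := assA als thss omega_star k k 1; rewrite ler01 lexx scale1r subrr scale0r addr0.
  by apply.
have slo2_gt0 : 0 < slo ^+ 2 by rewrite exprn_gt0.
have vs2_ge1 : 1 <= vs2.
  apply: (HinvM_eigen_ub_ge1 (eigenvalue_dim_gt0 lam_eig) slo2_gt0 _ HinvM_le).
  by move=> l /spec /andP[].
have m_le : norm_inf2 X * norm2 (th - thss k) <= c0.
  by apply: (scaled_radius_le (norm_inf2_ge0 X) _ vs2_ge1 c0_ge0 th_near delta0_le); lra.
have [lo hi] := Hmat_eigenvalue_perturb (logit_dist_le X th (thss k)) spec lam_eig.
set E2 := expR _ ^+ 2 in lo hi.
have E2_le : E2 <= 3/2 by apply: expR_sqr_le; lra.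
have E2_gt0 : 0 < E2 by rewrite exprn_gt0 ?expR_gt0.
apply/andP; split; nra.
Qed.
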